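(* Let $\theta_1,\theta_2,\dots$ be real numbers with $\theta_n\to\theta$ as $n\to\infty$, and define $\Lambda$ on $[1,\infty)$ by $\Lambda\bigl(\frac1{1-s}\bigr)=\exp\sum_{j\ge1}\frac{\theta_j-\theta}{j}s^j$ for $0\le s<1$. Let $(x_n)$, $(y_n)$ be sequences in $[1,\infty)$ with $x_n\to\infty$, $y_n\to\infty$, and suppose there is a constant $C>1$ with $\frac1C\le\frac{x_n}{y_n}\le C$ for all $n$. Then $\displaystyle\lim_{n\to\infty}\frac{\Lambda(x_n)}{\Lambda(y_n)}=1$. *)

From Stdlib Require Import Reals.
Open Scope R_scope.

(* The j-th term (j >= 1, encoded as j = S k) of the series
   sum_{j>=1} (theta_j - theta)/j * s^j. *)
Definition lam_term (theta : nat -> R) (thinf s : R) (k : nat) : R :=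
  (theta (S k) - thinf) / INR (S k) * s ^ (S k).

Definition is_Lambda (theta : nat -> R) (thinf : R) (Lam : R -> R) : Prop :=
  forall s L, 0 <= s < 1 ->
    infinite_sum (lam_term theta thinf s) L ->
    Lam (1 / (1 - s)) = exp L.

(* With x = 1/(1-s), log Lambda(x) is the power series
   sum_k (theta_(k+1) - theta)/(k+1) s^(k+1).  For s, t <= m < 1 one has
   |s^(k+1) - t^(k+1)| <= (k+1) |s - t| m^k, so if |theta_j - theta| <= e for
   j >= N the difference of the logarithms at s and t is at most
   |s - t| (N sup_j |theta_j - theta| + e/(1 - m)).  Take s = 1 - 1/x_n,
   t = 1 - 1/y_n and 1 - m = min(1/x_n, 1/y_n): the first term tends to 0 as
   x_n, y_n -> oo, while the comparability of x_n and y_n gives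
   |s - t| <= (C - 1)(1 - m), so the second term is at most e (C - 1). *)

From Stdlib Require Import Reals Lra Lia Psatz.
From Coquelicot Require Import Coquelicot.
Open Scope R_scope.

Lemma Rabs_lim_le (u : nat -> R) (l B : R) :
  Un_cv u l -> (forall n, Rabs (u n) <= B) -> Rabs l <= B.
Proof.
  intros Hu HB.
  apply (Rle_cv_lim HB (cv_cvabs _ _ Hu)).
  intros eps Heps; exists 0%nat; intros n _.
  unfold Rdist; rewrite Rminus_diag, Rabs_R0; exact Heps.
Qed.

Lemma pow_succ_sub_bound (s t m : R) (k : nat) :
  0 <= s <= m -> 0 <= t <= m ->
  Rabs (s ^ S k - t ^ S k) <= INR (S k) * Rabs (s - t) * m ^ k.
Proof.
  intros Hs Ht; induction k as [|k IH].
  - simpl; rewrite !Rmult_1_r; lra.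
  - replace (s ^ S (S k) - t ^ S (S k))
      with (s * (s ^ S k - t ^ S k) + t ^ S k * (s - t)) by (simpl; ring).
    eapply Rle_trans; [apply Rabs_triang|].
    rewrite !Rabs_mult, (Rabs_right s), (Rabs_right (t ^ S k)) by (apply Rle_ge; try apply pow_le; lra).
    assert (Htk : t ^ S k <= m * m ^ k) by (apply (pow_incr t m (S k)); lra).
    assert (Hmk : 0 <= m ^ k) by (apply pow_le; lra).
    pose proof (Rabs_pos (s - t)); pose proof (Rabs_pos (s ^ S k - t ^ S k)).
    assert (s * Rabs (s ^ S k - t ^ S k) <= m * (INR (S k) * Rabs (s - t) * m ^ k))
      by (apply Rmult_le_compat; lra).
    assert (t ^ S k * Rabs (s - t) <= m * m ^ k * Rabs (s - t))
      by (apply Rmult_le_compat_r; lra).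
    rewrite S_INR; change (m ^ S k) with (m * m ^ k); nra.
Qed.

Lemma sum_lt_indicator (N : nat) (M : R) (K : nat) :
  sum_f_R0 (fun k => if (k <? N)%nat then M else 0) K = INR (Nat.min (S K) N) * M.
Proof.
  induction K as [|K IH]; simpl sum_f_R0.
  - destruct (Nat.ltb_spec 0 N); [replace (Nat.min 1 N) with 1%nat by lia
                          | replace (Nat.min 1 N) with 0%nat by lia]; simpl; ring.
  - rewrite IH; destruct (Nat.ltb_spec (S K) N).
    + replace (Nat.min (S (S K)) N) with (S (S K)) by lia.
      replace (Nat.min (S K) N) with (S K) by lia.
      rewrite (S_INR (S K)); ring.
    + replace (Nat.min (S (S K)) N) with N by lia.
      replace (Nat.min (S K) N) with N by lia; ring.
Qed.

Lemma sum_weighted_geom_le (b : nat -> R) (M e m : R) (N K : nat) :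
  0 <= M -> 0 <= e -> 0 <= m < 1 ->
  (forall k, b k <= M) -> (forall k, (N <= k)%nat -> b k <= e) ->
  sum_f_R0 (fun k => b k * m ^ k) K <= INR N * M + e / (1 - m).
Proof.
  intros HM He Hm HbM Hbe.
  assert (Hpow : forall k, 0 <= m ^ k <= 1).
  { intros k; split; [apply pow_le; lra|rewrite <- (pow1 k); apply pow_incr; lra]. }
  apply Rle_trans with
    (sum_f_R0 (fun k => (if (k <? N)%nat then M else 0) + e * m ^ k) K).
  { apply sum_Rle; intros k _; pose proof (Hpow k); pose proof (HbM k).
    destruct (Nat.ltb_spec k N) as [Hk|Hk].
    - destruct (Rle_lt_dec 0 (b k)).
      + assert (b k * m ^ k <= M * 1) by (apply Rmult_le_compat; lra). nra.
      + nra.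
    - assert (b k * m ^ k <= e * m ^ k) by (apply Rmult_le_compat_r; [|apply Hbe; lia]; lra).
      lra. }
  rewrite sum_plus, sum_lt_indicator.
  assert (INR (Nat.min (S K) N) <= INR N) by (apply le_INR; lia).
  assert (sum_f_R0 (fun k => e * m ^ k) K <= e / (1 - m)).
  { replace (sum_f_R0 (fun k => e * m ^ k) K) with (e * sum_f_R0 (fun k => m ^ k) K)
      by (rewrite scal_sum; apply sum_eq; intros; ring).
    rewrite tech3 by lra.
    pose proof (pow_le m (S K) ltac:(lra)).
    unfold Rdiv; apply Rmult_le_compat_l; [lra|].
    rewrite <- (Rmult_1_l (/ (1 - m))) at 2.
    apply Rmult_le_compat_r; [left; apply Rinv_0_lt_compat|]; lra. }
  nra.
Qed.

Lemma inv_sub_le_ratio (x y C : R) :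
  0 < x -> 0 < y -> 0 < C -> / C <= x / y <= C ->
  Rabs (/ x - / y) <= (C - 1) * Rmin (/ x) (/ y).
Proof.
  intros Hx Hy HC [Hlo Hhi].
  assert (Hyx : y <= C * x).
  { apply (Rmult_le_reg_r (/ (C * y))); [apply Rinv_0_lt_compat; nra|].
    replace (y * / (C * y)) with (/ C) by (field; lra).
    replace (C * x * / (C * y)) with (x / y) by (field; lra). exact Hlo. }
  assert (Hxy : x <= C * y).
  { apply (Rmult_le_reg_r (/ y)); [apply Rinv_0_lt_compat; lra|].
    replace (C * y * / y) with C by (field; lra). exact Hhi. }
  replace (/ x - / y) with ((y - x) / (x * y)) by (field; lra).
  assert (Hxy0 : 0 < x * y) by nra.
  unfold Rmin; destruct (Rle_dec (/ x) (/ y)) as [Hle|Hlt].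
  - replace ((C - 1) * / x) with ((C - 1) * y / (x * y)) by (field; lra).
    unfold Rdiv; rewrite Rabs_mult, (Rabs_right (/ (x * y))) by (left; apply Rinv_0_lt_compat; lra).
    apply Rmult_le_compat_r; [left; apply Rinv_0_lt_compat; lra|].
    apply Rabs_le; split; nra.
  - replace ((C - 1) * / y) with ((C - 1) * x / (x * y)) by (field; lra).
    unfold Rdiv; rewrite Rabs_mult, (Rabs_right (/ (x * y))) by (left; apply Rinv_0_lt_compat; lra).
    apply Rmult_le_compat_r; [left; apply Rinv_0_lt_compat; lra|].
    apply Rabs_le; split; nra.
Qed.

Lemma cv_dist_bounded (u : nat -> R) (l : R) :
  Un_cv u l -> exists M, forall n, Rabs (u n - l) <= M.
Proof.
  intros Hu; destruct (maj_by_pos u (exist _ l Hu)) as [B [_ HB]].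
  exists (B + Rabs l); intros n.
  unfold Rminus; eapply Rle_trans; [apply Rabs_triang|].
  rewrite Rabs_Ropp; pose proof (HB n); lra.
Qed.

(* Coquelicot's [Series] is [0] on divergent series; [lam_log] is only used for
   [0 <= s < 1], where the series converges. *)
Definition lam_log (theta : nat -> R) (thinf s : R) : R :=
  Series (lam_term theta thinf s).

Section LambdaLog.

Variables (theta : nat -> R) (thinf M : R).
Hypothesis theta_bounded : forall k, Rabs (theta k - thinf) <= M.

Lemma infinite_sum_lam_log (s : R) :
  0 <= s < 1 -> infinite_sum (lam_term theta thinf s) (lam_log theta thinf s).
Proof.
  intros Hs; apply is_series_Reals, Series_correct.
  apply (@ex_series_le R_AbsRing R_CompleteNormedModule _ (fun k => scal M (s ^ k))).
  2: { apply (@ex_series_scal_l R_AbsRing R_NormedModule), ex_series_geom; rewrite Rabs_right; lra. }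
  intros k; change (Rabs (lam_term theta thinf s k) <= M * s ^ k).
  unfold lam_term, Rdiv; rewrite !Rabs_mult.
  assert (Hk : 1 <= INR (S k)) by (rewrite S_INR; pose proof (pos_INR k); lra).
  rewrite Rabs_inv, (Rabs_right (INR (S k))), (Rabs_right (s ^ S k))
    by (apply Rle_ge; try apply pow_le; lra).
  assert (Hinv : 0 < / INR (S k) <= 1).
  { split; [apply Rinv_0_lt_compat; lra|rewrite <- Rinv_1; apply Rinv_le_contravar; lra]. }
  assert (Hsk : s ^ S k <= s ^ k) by (simpl; pose proof (pow_le s k); nra).
  pose proof (pow_le s (S k)); pose proof (theta_bounded (S k)); pose proof (Rabs_pos (theta (S k) - thinf)).
  apply Rmult_le_compat; nra.
Qed.

Lemma lam_term_sub_bound (s t m : R) (k : nat) :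
  0 <= s <= m -> 0 <= t <= m ->
  Rabs (lam_term theta thinf s k - lam_term theta thinf t k)
    <= Rabs (theta (S k) - thinf) * m ^ k * Rabs (s - t).
Proof.
  intros Hs Ht; unfold lam_term.
  assert (Hk : 0 < INR (S k)) by (apply lt_0_INR; lia).
  replace ((theta (S k) - thinf) / INR (S k) * s ^ S k
           - (theta (S k) - thinf) / INR (S k) * t ^ S k)
    with ((theta (S k) - thinf) * / INR (S k) * (s ^ S k - t ^ S k)) by (field; lra).
  rewrite !Rabs_mult, Rabs_inv, (Rabs_right (INR (S k))) by lra.
  pose proof (pow_succ_sub_bound s t m k Hs Ht).
  pose proof (Rabs_pos (theta (S k) - thinf)).
  replace (Rabs (theta (S k) - thinf) * m ^ k * Rabs (s - t))
    with (Rabs (theta (S k) - thinf) * / INR (S k) * (INR (S k) * Rabs (s - t) * m ^ k))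
    by (field; lra).
  apply Rmult_le_compat_l; [apply Rmult_le_pos; [lra|left; apply Rinv_0_lt_compat; lra]|assumption].
Qed.

Lemma lam_log_sub_bound (e m s t : R) (N : nat) :
  0 <= M -> 0 <= e -> 0 <= s <= m -> 0 <= t <= m -> m < 1 ->
  (forall k, (N <= k)%nat -> Rabs (theta k - thinf) <= e) ->
  Rabs (lam_log theta thinf s - lam_log theta thinf t)
    <= Rabs (s - t) * (INR N * M + e / (1 - m)).
Proof.
  intros HM He Hs Ht Hm Htail.
  apply (Rabs_lim_le _ _ _
    (CV_minus _ _ _ _ (infinite_sum_lam_log s ltac:(lra)) (infinite_sum_lam_log t ltac:(lra)))).
  intros K; cbv beta; rewrite <- minus_sum.
  eapply Rle_trans; [apply Rsum_abs|].
  eapply Rle_trans; [apply sum_Rle; intros k _; apply (lam_term_sub_bound s t m k Hs Ht)|].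
  rewrite <- scal_sum.
  apply Rmult_le_compat_l; [apply Rabs_pos|].
  apply sum_weighted_geom_le; try lra.
  - intros k; apply theta_bounded.
  - intros k Hk; apply Htail; lia.
Qed.

Lemma Lambda_eq_exp_lam_log (Lam : R -> R) (x : R) :
  is_Lambda theta thinf Lam -> 1 <= x ->
  Lam x = exp (lam_log theta thinf (1 - / x)).
Proof.
  intros HLam Hx.
  assert (Hinv : 0 < / x <= 1).
  { split; [apply Rinv_0_lt_compat; lra|rewrite <- Rinv_1; apply Rinv_le_contravar; lra]. }
  replace x with (1 / (1 - (1 - / x))) at 1 by (field; lra).
  apply HLam; [lra|apply infinite_sum_lam_log; lra].
Qed.

End LambdaLog.

Lemma lam_log_sub_cv0 (theta : nat -> R) (thinf : R) (x y : nat -> R) (C : R) :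
  Un_cv theta thinf ->
  (forall n, 1 <= x n) -> (forall n, 1 <= y n) ->
  cv_infty x -> cv_infty y ->
  0 < C -> (forall n, / C <= x n / y n <= C) ->
  Un_cv (fun n => lam_log theta thinf (1 - / x n) - lam_log theta thinf (1 - / y n)) 0.
Proof.
  intros Hth Hx Hy Hcx Hcy HC Hr eps Heps.
  destruct (cv_dist_bounded _ _ Hth) as [M HM].
  assert (HM0 : 0 <= M) by (eapply Rle_trans; [apply Rabs_pos|apply (HM 0%nat)]).
  set (e := eps / (2 * C)).
  assert (He : 0 < e) by (unfold e; apply Rdiv_lt_0_compat; lra).
  destruct (Hth e He) as [N0 HN0].
  assert (Hinv := CV_minus _ _ _ _ (cv_infty_cv_0 _ Hcx) (cv_infty_cv_0 _ Hcy)).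
  rewrite Rminus_0_r in Hinv.
  set (K := INR N0 * M + 1).
  assert (HK : 0 < K) by (unfold K; pose proof (pos_INR N0); nra).
  destruct (Hinv (eps / (2 * K))) as [N1 HN1]; [apply Rdiv_lt_0_compat; lra|].
  exists N1; intros n Hn; specialize (HN1 n Hn).
  unfold Rdist in *; rewrite Rminus_0_r in *.
  pose proof (Hx n); pose proof (Hy n).
  set (u := / x n) in *; set (v := / y n) in *.
  assert (Hu : 0 < u <= 1).
  { split; [apply Rinv_0_lt_compat; lra|rewrite <- Rinv_1; apply Rinv_le_contravar; lra]. }
  assert (Hv : 0 < v <= 1).
  { split; [apply Rinv_0_lt_compat; lra|rewrite <- Rinv_1; apply Rinv_le_contravar; lra]. }
  set (r := Rmin u v).
  assert (Hr0 : 0 < r) by (apply Rmin_glb_lt; lra).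
  assert (Hru : r <= u) by apply Rmin_l.
  assert (Hrv : r <= v) by apply Rmin_r.
  assert (Hratio : Rabs (u - v) <= (C - 1) * r)
    by (apply inv_sub_le_ratio; [lra|lra|lra|apply Hr]).
  eapply Rle_lt_trans.
  { apply (lam_log_sub_bound theta thinf M HM e (1 - r) (1 - u) (1 - v) N0); try lra.
    intros k Hk; left; apply HN0; exact Hk. }
  replace (1 - u - (1 - v)) with (- (u - v)) by ring; rewrite Rabs_Ropp.
  replace (1 - (1 - r)) with r by ring.
  replace (Rabs (u - v) * (INR N0 * M + e / r))
    with (Rabs (u - v) * (INR N0 * M) + e * (Rabs (u - v) / r)) by (field; lra).
  assert (Hq : Rabs (u - v) / r <= C - 1).
  { apply (Rmult_le_reg_r r); [lra|].
    replace (Rabs (u - v) / r * r) with (Rabs (u - v)) by (field; lra); lra. }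
  assert (Hhead : Rabs (u - v) * (INR N0 * M) < eps / 2).
  { pose proof (Rabs_pos (u - v)).
    apply Rle_lt_trans with (Rabs (u - v) * K); [apply Rmult_le_compat_l; unfold K; lra|].
    replace (eps / 2) with (eps / (2 * K) * K) by (field; lra).
    apply Rmult_lt_compat_r; lra. }
  assert (Htail : e * (Rabs (u - v) / r) < eps / 2).
  { apply Rle_lt_trans with (e * (C - 1)); [apply Rmult_le_compat_l; lra|].
    replace (eps / 2) with (e * C) by (unfold e; field; lra).
    apply Rmult_lt_compat_l; lra. }
  lra.
Qed.

Theorem lemma6p2 (theta : nat -> R) (thinf : R) (Lam : R -> R)
  (x y : nat -> R) (C : R) :
  Un_cv theta thinf ->
  is_Lambda theta thinf Lam ->
  (forall n, 1 <= x n) -> (forall n, 1 <= y n) ->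
  cv_infty x -> cv_infty y ->
  1 < C ->
  (forall n, / C <= x n / y n <= C) ->
  Un_cv (fun n => Lam (x n) / Lam (y n)) 1.
Proof.
  intros Hth HLam Hx Hy Hcx Hcy HC Hr.
  destruct (cv_dist_bounded _ _ Hth) as [M HM].
  assert (Hexp := continuity_seq exp _ 0
    (derivable_continuous_pt _ _ (derivable_pt_exp 0))
    (lam_log_sub_cv0 theta thinf x y C Hth Hx Hy Hcx Hcy ltac:(lra) Hr)).
  rewrite exp_0 in Hexp.
  intros eps Heps; destruct (Hexp eps Heps) as [N HN]; exists N; intros n Hn.
  rewrite (Lambda_eq_exp_lam_log theta thinf M HM Lam (x n) HLam (Hx n)),
          (Lambda_eq_exp_lam_log theta thinf M HM Lam (y n) HLam (Hy n)).
  unfold Rdiv; rewrite <- exp_Ropp, <- exp_plus; apply HN, Hn.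
Qed.
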